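(* In the setting described in the context, for a given $x\in\mathcal X$, $\max_{u\in\mathcal U(x)}\min\{c_2y: y\in\mathcal Y(x,u)\}=\max_{u\in\mathcal U^*(x)\cup\mathcal V^*(x)}\min\{c_2y: y\in\mathcal Y(x,u)\}$, where $\mathcal U^*(x)=\bigcup_{\pi\in\mathcal P_\Pi}\mathcal{OU}(x,\pi)$ and $\mathcal V^*(x)=\bigcup_{\gamma\in\mathcal R_\Pi}\mathcal{OU}(x,\gamma)$.
   Context: $\mathcal X=\{x\in\mathbb Z^{m_x}_+\times\mathbb R^{n_x}_+: Ax\ge b\}$, $\mathcal U(x)=\{u\in\mathbb R^{n_u}_+: F(x)u\le h+Gx\}$ with $F(x)$ a matrix depending on $x$, $\mathcal Y(x,u)=\{y\in\mathbb R^{n_y}_+: B_2y\ge d-B_1x-Eu\}$. $\Pi=\{\pi\ge 0: B_2^\intercal\pi\le c_2^\intercal\}$, with finite sets of extreme points $\mathcal P_\Pi$ and extreme rays $\mathcal R_\Pi$. For a vector $\beta$, $\mathcal{OU}(x,\beta)$ denotes the set of optimal solutions of the linear program $\max\{(-Eu)^\intercal\beta: u\in\mathcal U(x)\}$. The optimal value of an infeasible minimization (maximization) problem is $+\infty$ ($-\infty$). Standing assumptions: (A1) $\mathcal U(x)\ne\emptyset$ for all $x\in\mathcal X$; (A2) $\mathcal U(x)$ is bounded for all $x\in\mathcal X$; (A3) $\min\{c_1x+c_2y: x\in\mathcal X,u\in\mathcal U(x),y\in\mathcal Y(x,u)\}$ has a finite optimal value. *)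

From HB Require Import structures.
From mathcomp Require Import all_boot all_order all_algebra.
From mathcomp Require Import all_classical all_reals.
From mathcomp Require Import ereal.
Set Implicit Arguments. Unset Strict Implicit. Unset Printing Implicit Defensive.
Import Order.TTheory GRing.Theory Num.Theory.
Local Open Scope ring_scope.
Local Open Scope classical_set_scope.

Section Defs.
Variable R : realType.

Definition mxle m n (A B : 'M[R]_(m, n)) : Prop := forall i j, A i j <= B i j.

Definition vdot n (a b : 'cV[R]_n) : R := \sum_(i < n) a i 0 * b i 0.

Definition Xset mi nc k (A : 'M[R]_(k, mi + nc)) (b : 'cV[R]_k) : set 'cV[R]_(mi + nc) :=
  [set x | mxle 0 x /\ (forall i : 'I_mi, x (lshift nc i) 0 \is a Num.int) /\ mxle b (A *m x)].

Definition Uset nx nu p (F : 'cV[R]_nx -> 'M[R]_(p, nu)) (h : 'cV[R]_p)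
  (G : 'M[R]_(p, nx)) (x : 'cV[R]_nx) : set 'cV[R]_nu :=
  [set u | mxle 0 u /\ mxle (F x *m u) (h + G *m x)].

Definition Yset nx nu ny q (B1 : 'M[R]_(q, nx)) (B2 : 'M[R]_(q, ny)) (E : 'M[R]_(q, nu))
  (d : 'cV[R]_q) (x : 'cV[R]_nx) (u : 'cV[R]_nu) : set 'cV[R]_ny :=
  [set y | mxle 0 y /\ mxle (d - B1 *m x - E *m u) (B2 *m y)].

(* Pi = {pi >= 0 : B2^T pi <= c2^T}  (c2 is stored as a column vector) *)
Definition PiSet ny q (B2 : 'M[R]_(q, ny)) (c2 : 'cV[R]_ny) : set 'cV[R]_q :=
  [set pi | mxle 0 pi /\ mxle (B2^T *m pi) c2].

Definition reccPi ny q (B2 : 'M[R]_(q, ny)) : set 'cV[R]_q :=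
  [set g | mxle 0 g /\ mxle (B2^T *m g) 0].

Definition extreme_point n (S : set 'cV[R]_n) (p : 'cV[R]_n) : Prop :=
  S p /\ forall a b t, S a -> S b -> 0 < t < 1 ->
    p = t *: a + (1 - t) *: b -> a = p /\ b = p.

Definition extreme_ray n (C : set 'cV[R]_n) (r : 'cV[R]_n) : Prop :=
  C r /\ r != 0 /\ forall a b, C a -> C b -> r = a + b ->
    exists al be : R, [/\ 0 <= al, 0 <= be, a = al *: r & b = be *: r].

Definition PPi ny q (B2 : 'M[R]_(q, ny)) (c2 : 'cV[R]_ny) : set 'cV[R]_q :=
  extreme_point (PiSet B2 c2).
Definition RPi ny q (B2 : 'M[R]_(q, ny)) : set 'cV[R]_q :=
  extreme_ray (reccPi B2).

Definition OU nx nu p q (F : 'cV[R]_nx -> 'M[R]_(p, nu)) (h : 'cV[R]_p)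
  (G : 'M[R]_(p, nx)) (E : 'M[R]_(q, nu)) (x : 'cV[R]_nx) (beta : 'cV[R]_q)
  : set 'cV[R]_nu :=
  [set u | Uset F h G x u /\
     forall u', Uset F h G x u' -> vdot (- (E *m u')) beta <= vdot (- (E *m u)) beta].

(* second-stage value  min {c2 y : y in Y(x,u)}  (+oo if infeasible) *)
Definition Qval nx nu ny q (B1 : 'M[R]_(q, nx)) (B2 : 'M[R]_(q, ny)) (E : 'M[R]_(q, nu))
  (d : 'cV[R]_q) (c2 : 'cV[R]_ny) (x : 'cV[R]_nx) (u : 'cV[R]_nu) : \bar R :=
  ereal_inf [set (vdot c2 y)%:E | y in Yset B1 B2 E d x u].

End Defs.

(* For a fixed first-stage decision u the second-stage value is the LP
   min {c2 y : y >= 0, B2 y >= r(u)} with r(u) = d - B1 x - E u, whose dual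
   feasible region is Pi.  If this LP is feasible with value s > -oo, strong
   duality together with the existence of optimal vertices gives an extreme
   point pi of Pi with r(u).pi >= s; every u' in OU(x, pi) has
   r(u').pi >= r(u).pi, so weak duality gives a value >= s at u'.  If it is
   infeasible, Farkas' lemma gives g in the recession cone of Pi with
   r(u).g > 0, which can be taken extreme (an extreme point of the slice of
   the cone by sum g = 1); every u' in OU(x, g) has r(u').g > 0, so its
   second stage is infeasible and has value +oo.  All polyhedral facts used
   derive from Farkas' lemma, proved by Fourier-Motzkin elimination. *)

From HB Require Import structures.
From mathcomp Require Import all_boot all_order all_algebra.
From mathcomp Require Import all_classical all_reals.
From mathcomp Require Import ereal.
From mathcomp Require Import ring lra.
Set Implicit Arguments. Unset Strict Implicit. Unset Printing Implicit Defensive.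
Import Order.TTheory GRing.Theory Num.Theory.
Local Open Scope ring_scope.
Local Open Scope classical_set_scope.

Section Farkas.
Variables (R : realFieldType) (V : lmodType R).
Implicit Types (f g : V -> R) (u v : V).

Lemma scalarN f v : scalar f -> f (- v) = - f v.
Proof.
move=> /GRing.zmod_morphism_linear fB; have f0 : f 0 = 0 by rewrite -(subrr 0) fB subrr.
by rewrite -sub0r fB f0 sub0r.
Qed.

(* [pivot p x0 f v = f (v - (p v / p x0) *: x0)]: the functional [f] read on the
   hyperplane [p = 0] after projecting along [x0]. *)
Definition pivot (p : V -> R) (x0 : V) (f : V -> R) (v : V) : R :=
  f v - f x0 / p x0 * p v.

Lemma pivot_scalar p x0 f : scalar p -> scalar f -> scalar (pivot p x0 f).
Proof. by move=> lp lf c u v; rewrite /pivot lp lf; ring. Qed.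

Section FarkasStep.
Variables (I : finType) (A : {set I}) (a : I -> V -> R) (b : V -> R).
Variables (i0 : I) (x0 : V).
Hypotheses (la : forall i, scalar (a i)) (lb : scalar b) (ax0_lt0 : a i0 x0 < 0).

Lemma pivot_implication :
  (forall v, (forall i, i \in A -> 0 <= a i v) -> 0 <= b v) ->
  forall v, (forall i, i \in A :\ i0 -> 0 <= pivot (a i0) x0 (a i) v) ->
    0 <= pivot (a i0) x0 b v.
Proof.
move=> H v hv; pose y := (- (a i0 v / a i0 x0)) *: x0 + v.
have pivotE f : scalar f -> pivot (a i0) x0 f v = f y.
  by move=> lf; rewrite /y lf /pivot; field; rewrite lt_eqF.
rewrite pivotE //; apply: H => i Ai; rewrite -pivotE //.
have [->|ne] := eqVneq i i0; first by rewrite /pivot divff ?lt_eqF // mul1r subrr.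
by apply: hv; rewrite in_setD1 ne.
Qed.

Lemma pivot_multipliers (mu : I -> R) : i0 \in A -> b x0 < 0 ->
  (forall i, i \in A :\ i0 -> 0 <= a i x0) -> (forall i, 0 <= mu i) ->
  (forall v, pivot (a i0) x0 b v = \sum_(i in A :\ i0) mu i * pivot (a i0) x0 (a i) v) ->
  exists2 lam : I -> R, (forall i, 0 <= lam i) &
    forall v, b v = \sum_(i in A) lam i * a i v.
Proof.
move=> Ai0 bx0 ax0_ge0 mu_ge0 eb; pose S := \sum_(i in A :\ i0) mu i * a i x0.
have S_ge0 : 0 <= S by apply: sumr_ge0 => i Ai; rewrite mulr_ge0 ?ax0_ge0.
exists (fun i => if i == i0 then (b x0 - S) / a i0 x0 else mu i) => [i|v].
  by case: eqP => // _; rewrite ler_ndivlMr // mul0r; lra.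
rewrite (big_setD1 i0) //= eqxx (eq_bigr (fun i => mu i * a i v)); last first.
  by move=> i; rewrite in_setD1 => /andP[/negPf ->].
have := eb v; rewrite /pivot (eq_bigr (fun i =>
  mu i * a i v - mu i * a i x0 * (a i0 v / a i0 x0))); last first.
  by move=> i _; field; rewrite lt_eqF.
rewrite sumrB -mulr_suml -/S => e; rewrite -[b v](subrK (b x0 / a i0 x0 * a i0 v)) e.
by field; rewrite lt_eqF.
Qed.

End FarkasStep.

Lemma farkas_on (I : finType) (A : {set I}) (a : I -> V -> R) (b : V -> R) :
  (forall i, scalar (a i)) -> scalar b ->
  (forall v, (forall i, i \in A -> 0 <= a i v) -> 0 <= b v) ->
  exists2 lam : I -> R, (forall i, 0 <= lam i) &
    forall v, b v = \sum_(i in A) lam i * a i v.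
Proof.
move: {2}#|A| (erefl #|A|) => n; elim: n A a b => [|n IH] A a b cardA la lb H.
  exists (fun=> 0) => // v; rewrite (cards0_eq cardA) big_set0.
  have H0 u : 0 <= b u by apply: H => i; rewrite (cards0_eq cardA) inE.
  by apply/eqP; rewrite eq_le -oppr_ge0 -scalarN // !H0.
have [i0 Ai0] : exists i0, i0 \in A by apply/card_gt0P; rewrite cardA.
have cardA' : #|A :\ i0| = n by move: cardA; rewrite (cardsD1 i0) Ai0 add1n => -[].
have [HA'|] := pselect (forall v, (forall i, i \in A :\ i0 -> 0 <= a i v) -> 0 <= b v).
  have [lam lam_ge0 eb] := IH _ a b cardA' la lb HA'.
  exists (fun i => if i == i0 then 0 else lam i) => [i|v]; first by case: eqP.
  rewrite (big_setD1 i0) //= eqxx mul0r add0r eb; apply: eq_bigr => i.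
  by rewrite in_setD1 => /andP[/negPf ->].
move=> /existsNP[x0 /not_implyP[ax0_ge0 /negP]]; rewrite -ltNge => bx0.
have ax0_lt0 : a i0 x0 < 0.
  rewrite ltNge; apply/negP => ax0; move: bx0; rewrite ltNge H // => i Ai.
  by have [->//|ne] := eqVneq i i0; apply: ax0_ge0; rewrite in_setD1 ne.
have [mu mu_ge0 eb] := IH _ _ _ cardA' (fun i => pivot_scalar x0 (la i0) (la i))
  (pivot_scalar x0 (la i0) lb) (pivot_implication la lb ax0_lt0 H).
exact: (pivot_multipliers ax0_lt0 Ai0 bx0 ax0_ge0 mu_ge0 eb).
Qed.

End Farkas.

Lemma farkas (R : realFieldType) (V : lmodType R) (I : finType)
    (a : I -> V -> R) (b : V -> R) :
  (forall i, scalar (a i)) -> scalar b ->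
  (forall v, (forall i, 0 <= a i v) -> 0 <= b v) ->
  exists2 lam : I -> R, (forall i, 0 <= lam i) &
    forall v, b v = \sum_i lam i * a i v.
Proof.
move=> la lb H; have [|lam lam_ge0 eb] := farkas_on (A := [set: I]%SET) la lb.
  by move=> v hv; apply: H => i; apply: hv; rewrite inE.
by exists lam => // v; rewrite eb; apply: eq_bigl => i; rewrite inE.
Qed.

Section Vdot.
Variable R : realType.

Lemma mxle_cV n (a b : 'cV[R]_n) : mxle a b <-> forall i, a i 0 <= b i 0.
Proof. by split => [h i | h i j]; [apply: h | rewrite (ord1 j); apply: h]. Qed.

Lemma mxle0_cV n (a : 'cV[R]_n) : mxle 0 a <-> forall i, 0 <= a i 0.
Proof. by rewrite mxle_cV; split => h i; have := h i; rewrite mxE. Qed.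

Lemma mxle_col_mx m1 m2 n (a1 b1 : 'M[R]_(m1, n)) (a2 b2 : 'M[R]_(m2, n)) :
  mxle (col_mx a1 a2) (col_mx b1 b2) <-> mxle a1 b1 /\ mxle a2 b2.
Proof.
split => [h | [h1 h2] i j].
  by split => i j; [have := h (lshift m2 i) j | have := h (rshift m1 i) j];
    rewrite ?col_mxEu ?col_mxEd.
by rewrite !mxE; case: split_ordP => k _; [apply: h1 | apply: h2].
Qed.

Lemma mxle_refl m n (a : 'M[R]_(m, n)) : mxle a a.
Proof. by move=> i j. Qed.

Lemma mxleD m n (a b c d : 'M[R]_(m, n)) : mxle a b -> mxle c d -> mxle (a + c) (b + d).
Proof. by move=> hab hcd i j; rewrite !mxE lerD. Qed.

Lemma mxleZ m n k (a b : 'M[R]_(m, n)) : 0 <= k -> mxle a b -> mxle (k *: a) (k *: b).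
Proof. by move=> k_ge0 hab i j; rewrite !mxE ler_wpM2l. Qed.

Lemma mxle0D m n (a b : 'M[R]_(m, n)) : mxle 0 a -> mxle 0 b -> mxle 0 (a + b).
Proof. by move=> ha hb; rewrite -[0]addr0; apply: mxleD. Qed.

Lemma mxle0Z m n k (a : 'M[R]_(m, n)) : 0 <= k -> mxle 0 a -> mxle 0 (k *: a).
Proof. by move=> k_ge0 ha; rewrite -(scaler0 _ k); apply: mxleZ. Qed.

Lemma mxleN2 m n (a b : 'M[R]_(m, n)) : mxle (- a) (- b) <-> mxle b a.
Proof. by split => h i j; have := h i j; rewrite !mxE lerN2. Qed.

Lemma mxle_opp0 m n (a : 'M[R]_(m, n)) : mxle (- a) 0 <-> mxle 0 a.
Proof. by rewrite -[X in mxle _ X]oppr0 mxleN2. Qed.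

Lemma vdotE n (a b : 'cV[R]_n) : vdot a b = (a^T *m b) 0 0.
Proof. by rewrite mxE; apply: eq_bigr => i _; rewrite mxE. Qed.

Lemma vdotC n (a b : 'cV[R]_n) : vdot a b = vdot b a.
Proof. by apply: eq_bigr => i _; rewrite mulrC. Qed.

Lemma vdotDl n (a b c : 'cV[R]_n) : vdot (a + b) c = vdot a c + vdot b c.
Proof. by rewrite /vdot -big_split; apply: eq_bigr => i _; rewrite !mxE mulrDl. Qed.

Lemma vdotZl n k (a c : 'cV[R]_n) : vdot (k *: a) c = k * vdot a c.
Proof. by rewrite /vdot mulr_sumr; apply: eq_bigr => i _; rewrite !mxE mulrA. Qed.

Lemma vdotNl n (a c : 'cV[R]_n) : vdot (- a) c = - vdot a c.
Proof. by rewrite -scaleN1r vdotZl mulN1r. Qed.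

Lemma vdot0l n (c : 'cV[R]_n) : vdot 0 c = 0.
Proof. by rewrite -(scale0r 0) vdotZl mul0r. Qed.

Lemma vdotDr n (a b c : 'cV[R]_n) : vdot a (b + c) = vdot a b + vdot a c.
Proof. by rewrite !(vdotC a) vdotDl. Qed.

Lemma vdotZr n k (a c : 'cV[R]_n) : vdot a (k *: c) = k * vdot a c.
Proof. by rewrite !(vdotC a) vdotZl. Qed.

Lemma vdot_delta n (i : 'I_n) (z : 'cV[R]_n) : vdot (delta_mx i 0) z = z i 0.
Proof.
rewrite /vdot (bigD1 i) //= big1 => [|j /negPf ji]; rewrite mxE ?ji ?eqxx.
  by rewrite mul1r addr0.
by rewrite mul0r.
Qed.

Lemma vdot_mulmx m n (M : 'M[R]_(m, n)) y p : vdot (M *m y) p = vdot y (M^T *m p).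
Proof.
rewrite /vdot; under eq_bigr => i _ do rewrite mxE mulr_suml.
rewrite exchange_big /=; apply: eq_bigr => j _; rewrite mxE mulr_sumr.
by apply: eq_bigr => i _; rewrite mxE; ring.
Qed.

Lemma vdot_col_mx m1 m2 (a1 b1 : 'cV[R]_m1) (a2 b2 : 'cV[R]_m2) :
  vdot (col_mx a1 a2) (col_mx b1 b2) = vdot a1 b1 + vdot a2 b2.
Proof. by rewrite /vdot big_split_ord /=; congr (_ + _); apply: eq_bigr => i _;
  rewrite ?col_mxEu ?col_mxEd. Qed.

Lemma vdot_ge0 n (a b : 'cV[R]_n) : mxle 0 a -> mxle 0 b -> 0 <= vdot a b.
Proof.
by move=> /mxle0_cV ha /mxle0_cV hb; apply: sumr_ge0 => i _; apply: mulr_ge0.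
Qed.

Lemma vdot_le n (a b c : 'cV[R]_n) : mxle a b -> mxle 0 c -> vdot a c <= vdot b c.
Proof.
move=> /mxle_cV hab /mxle0_cV hc; apply: ler_sum => i _.
exact: ler_wpM2r.
Qed.

Lemma vdot_self_eq0 n (w : 'cV[R]_n) : vdot w w = 0 -> w = 0.
Proof.
move=> w0; apply/matrixP => i j; rewrite (ord1 j) mxE.
have /eqP : w i 0 * w i 0 = 0.
  by apply: (psumr_eq0P _ w0) => // k _; rewrite -expr2 sqr_ge0.
by rewrite mulf_eq0 orbb => /eqP.
Qed.

Lemma vdot1_ge0 n (g : 'cV[R]_n) : mxle 0 g -> 0 <= vdot (const_mx 1) g.
Proof. by apply: vdot_ge0 => i j; rewrite !mxE. Qed.

Lemma vdot1_ge_coord n (g : 'cV[R]_n) i : mxle 0 g -> g i 0 <= vdot (const_mx 1) g.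
Proof.
move/mxle0_cV => g_ge0; rewrite /vdot (bigD1 i) //= mxE mul1r lerDl.
by apply: sumr_ge0 => j _; rewrite mxE mul1r.
Qed.

Lemma vdot1_eq0 n (g : 'cV[R]_n) : mxle 0 g -> vdot (const_mx 1) g = 0 -> g = 0.
Proof.
move=> g_ge0 g0; apply/matrixP => i j; rewrite (ord1 j) mxE.
apply/eqP; rewrite eq_le -{1}g0 vdot1_ge_coord //; exact: (mxle0_cV _).1.
Qed.

Lemma vdot_bound n (w u : 'cV[R]_n) M : (forall i, `|u i 0| <= M) ->
  vdot w u <= \sum_(i < n) `|w i 0| * M.
Proof.
move=> hu; apply: ler_sum => i _; apply: le_trans (ler_norm _) _.
by rewrite normrM ler_wpM2l.
Qed.

End Vdot.


Section Alternative.
Variable R : realType.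

Theorem mx_alternative m n (M : 'M[R]_(m, n)) (c : 'cV[R]_m) :
  ~ (exists z, mxle (M *m z) c) ->
  exists lam, [/\ mxle 0 lam, M^T *m lam = 0 & vdot c lam < 0].
Proof.
move=> infeasible.
(* Homogenise: Farkas' lemma for the constraints [t >= 0, M z <= t c] on pairs
   [(z, t)] and the functional [- t]. *)
pose a (i : 'I_m + 'I_1) (w : 'cV[R]_n * 'cV[R]_1) : R :=
  if i is inl i then w.2 0 0 * c i 0 - (M *m w.1) i 0 else w.2 0 0.
pose b (w : 'cV[R]_n * 'cV[R]_1) : R := - w.2 0 0.
have la i : scalar (a i).
  by case: i => [i|_] k u v /=; rewrite ?mulmxDr -?scalemxAr !mxE; ring.
have lb : scalar b by move=> k u v; rewrite /b /= !mxE; ring.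
have H w : (forall i, 0 <= a i w) -> 0 <= b w.
  case: w => z t hw; have /= t_ge0 := hw (inr ord0).
  rewrite /b /= oppr_ge0 leNgt; apply/negP => t_gt0; apply: infeasible.
  exists ((t 0 0)^-1 *: z); apply/mxle_cV => i.
  have /= := hw (inl i); rewrite subr_ge0 => Mz_le.
  by rewrite -scalemxAr mxE ler_pdivrMl // mulrC.
have [lam lam_ge0 eb] := farkas la lb H.
pose l := \col_i lam (inl i).
have sum_a w : \sum_i lam i * a i w =
    w.2 0 0 * vdot c l - vdot (M^T *m l) w.1 + lam (inr ord0) * w.2 0 0.
  rewrite big_sumType big_ord1 /= (vdotC (M^T *m l)) -vdot_mulmx /vdot mulr_sumr -sumrB.
  by congr (_ + _); apply: eq_bigr => i _; rewrite !mxE; ring.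
exists l; split.
- by apply/mxle0_cV => i; rewrite mxE.
- apply: vdot_self_eq0; have := eb (M^T *m l, 0).
  by rewrite sum_a /b /= mxE; lra.
- have := eb (0, const_mx 1); rewrite sum_a /b /= (vdotC _ 0) vdot0l mxE.
  by have := lam_ge0 (inr ord0); lra.
Qed.

Lemma mx_alternative_ge0 m n (M : 'M[R]_(m, n)) (c : 'cV[R]_m) :
  ~ (exists z, mxle 0 z /\ mxle (M *m z) c) ->
  exists lam, [/\ mxle 0 lam, mxle 0 (M^T *m lam) & vdot c lam < 0].
Proof.
move=> infeasible.
have [|lam [lam_ge0 Mlam clam]] := @mx_alternative _ _ (col_mx (- 1%:M) M) (col_mx 0 c).
  move=> [z]; rewrite mul_col_mx mxle_col_mx mulNmx mul1mx mxle_opp0.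
  by move=> zP; apply: infeasible; exists z.
move: lam_ge0 Mlam clam; rewrite -[lam]vsubmxK -col_mx0 mxle_col_mx.
rewrite tr_col_mx mul_row_col vdot_col_mx vdot0l add0r linearN /= trmx1 mulNmx mul1mx.
move=> [mu_ge0 l_ge0] /eqP; rewrite addrC subr_eq0 => /eqP Ml cl.
by exists (dsubmx lam); rewrite Ml.
Qed.

Lemma mx_alternative_row m n (M : 'M[R]_(m, n)) (c : 'cV[R]_m) (w : 'cV[R]_n) s :
  ~ (exists z, mxle (M *m z) c /\ s <= vdot w z) ->
  exists l t, [/\ mxle 0 l, 0 <= t, M^T *m l = t *: w & vdot c l < t * s].
Proof.
move=> infeasible.
have [|lam [lam_ge0 Mlam clam]] :=
  @mx_alternative _ _ (col_mx M (- w^T)) (col_mx c (const_mx (- s))).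
  move=> [z]; rewrite mul_col_mx mxle_col_mx => -[Mz wz]; apply: infeasible.
  exists z; split => //; have := wz 0 0.
  by rewrite mulNmx [X in X <= _]mxE [X in _ <= X]mxE -vdotE lerN2.
move: lam_ge0 Mlam clam; rewrite -[lam]vsubmxK -col_mx0 mxle_col_mx.
set l := usubmx lam; set t := dsubmx lam; move=> [l_ge0 t_ge0].
rewrite tr_col_mx mul_row_col vdot_col_mx linearN /= trmxK (mx11_scalar t) mulNmx.
rewrite mul_mx_scalar => /eqP; rewrite subr_eq0 => /eqP Ml cl.
exists l, (t 0 0); split => //; first by have := t_ge0 0 0; rewrite mxE.
by move: cl; rewrite [vdot (const_mx _) _]/vdot big_ord1 !mxE mulr1n; lra.
Qed.

End Alternative.


Section Polyhedra.
Variable R : realType.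

Definition polyhedron n (P : set 'cV[R]_n) :=
  exists m (M : 'M[R]_(m, n)) (c : 'cV[R]_m), P = [set z | mxle (M *m z) c].

Lemma polyhedronI n (P Q : set 'cV[R]_n) :
  polyhedron P -> polyhedron Q -> polyhedron (P `&` Q).
Proof.
move=> [m1 [M1 [c1 ->]]] [m2 [M2 [c2 ->]]].
exists (m1 + m2)%N, (col_mx M1 M2), (col_mx c1 c2).
by apply/seteqP; split => z /=; rewrite mul_col_mx mxle_col_mx.
Qed.

Lemma polyhedron_mxle m n (M : 'M[R]_(m, n)) c : polyhedron [set z | mxle (M *m z) c].
Proof. by exists m, M, c. Qed.

Lemma polyhedron_ge0 n : polyhedron [set z : 'cV[R]_n | mxle 0 z].
Proof.
exists n, (- 1%:M), 0.
by apply/seteqP; split => z /=; rewrite mulNmx mul1mx mxle_opp0.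
Qed.

Lemma polyhedron_vdot_le n (w : 'cV[R]_n) s : polyhedron [set z | vdot w z <= s].
Proof.
exists 1%N, w^T, (const_mx s); apply/seteqP; split => z /=.
  by move=> h i j; rewrite (ord1 i) (ord1 j) [const_mx _ _ _]mxE -vdotE.
by move=> /(_ 0 0); rewrite [const_mx _ _ _]mxE -vdotE.
Qed.

Lemma polyhedron_vdot_ge n (w : 'cV[R]_n) s : polyhedron [set z | s <= vdot w z].
Proof.
have -> : [set z | s <= vdot w z] = [set z | vdot (- w) z <= - s].
  by apply/seteqP; split => z /=; rewrite vdotNl lerN2.
exact: polyhedron_vdot_le.
Qed.

Lemma polyhedron_argmax n (P : set 'cV[R]_n) w : polyhedron P -> P !=set0 ->
  (exists b, forall z, P z -> vdot w z <= b) ->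
  exists2 z, P z & forall z', P z' -> vdot w z' <= vdot w z.
Proof.
move=> [m [M [c ->]]] [z0 Pz0] [b ub].
pose s := sup [set vdot w z | z in [set z | mxle (M *m z) c]].
have s_ub z : mxle (M *m z) c -> vdot w z <= s.
  move=> Pz; apply: ub_le_sup; last by exists z.
  by exists b => _ [y Py <-]; apply: ub.
have [[z [Pz sz]]|] := pselect (exists z, mxle (M *m z) c /\ s <= vdot w z).
  by exists z => // z' Pz'; apply: le_trans (s_ub _ Pz') sz.
move=> /mx_alternative_row[l [t [l_ge0 t_ge0 Ml cl]]].
have tw z : mxle (M *m z) c -> t * vdot w z <= vdot c l.
  by move=> Pz; rewrite -vdotZl -Ml vdotC -vdot_mulmx vdot_le.
move: t_ge0; rewrite le_eqVlt => /predU1P[t0|t_gt0].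
  by have := tw z0 Pz0; move: cl; rewrite -t0 !mul0r; lra.
have : s <= vdot c l / t.
  apply: ge_sup; first by exists (vdot w z0), z0.
  by move=> _ [z Pz <-]; rewrite ler_pdivlMr // mulrC tw.
by rewrite ler_pdivlMr //; lra.
Qed.

Definition face n (F P : set 'cV[R]_n) := F `<=` P /\
  forall a b t z, F z -> P a -> P b -> 0 < t < 1 ->
    z = t *: a + (1 - t) *: b -> F a /\ F b.

Lemma face_extreme_point n (F P : set 'cV[R]_n) z :
  face F P -> extreme_point F z -> extreme_point P z.
Proof.
move=> [FP Fface] [Fz zext]; split; first exact: FP.
move=> a b t Pa Pb t01 ez; have [Fa Fb] := Fface a b t z Fz Pa Pb t01 ez.
exact: (zext a b t Fa Fb t01 ez).
Qed.

Lemma face_trans n (F G P : set 'cV[R]_n) : face F G -> face G P -> face F P.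
Proof.
move=> [FG Fface] [GP Gface]; split => [z /FG /GP //|a b t z Fz Pa Pb t01 ez].
have [Ga Gb] := Gface a b t z (FG _ Fz) Pa Pb t01 ez.
exact: Fface Fz Ga Gb t01 ez.
Qed.

Lemma face_argmax n (P : set 'cV[R]_n) w s : (forall z, P z -> vdot w z <= s) ->
  face (P `&` [set z | s <= vdot w z]) P.
Proof.
move=> ub; split => [z [] //|a b t z [Pz sz] Pa Pb /andP[t_gt0 t_lt1] ez].
move: sz; rewrite /= ez vdotDr !vdotZr => sz.
by have := ub a Pa; have := ub b Pb; split; split => //=; nra.
Qed.

Lemma exists_extreme_point n (P : set 'cV[R]_n) :
  polyhedron P -> P !=set0 -> P `<=` [set z | mxle 0 z] ->
  exists z, extreme_point P z.
Proof.
move=> pP neP P_ge0.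
(* Minimise the coordinates lexicographically, passing each time to the face
   where the next coordinate is minimal. *)
have lex k : exists F, [/\ polyhedron F, F !=set0, face F P &
    forall a b, F a -> F b -> forall j : 'I_n, (j < k)%N -> a j 0 = b j 0].
  elim: k => [|k [F [pF neF FP agree]]].
    by exists P; split => //; split => // a b t z _ Pa Pb.
  have [lt_kn|le_nk] := ltnP k n; last first.
    by exists F; split => // a b Fa Fb j _; apply: agree => //; apply: leq_trans le_nk.
  pose w : 'cV[R]_n := - delta_mx (Ordinal lt_kn) 0.
  have wE z : vdot w z = - z (Ordinal lt_kn) 0 by rewrite vdotNl vdot_delta.
  have [|zs Fzs zs_max] := polyhedron_argmax (w := w) pF neF.
    exists 0 => z /FP.1 /P_ge0 /mxle0_cV z_ge0; rewrite wE oppr_le0; exact: z_ge0.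
  exists (F `&` [set z | vdot w zs <= vdot w z]); split.
  - by apply: polyhedronI pF (polyhedron_vdot_ge _ _).
  - by exists zs; split => /=.
  - exact: face_trans (face_argmax zs_max) FP.
  move=> a b [Fa wa] [Fb wb] j; rewrite ltnS leq_eqVlt.
  case/predU1P => [jk|]; last exact: agree.
  have -> : j = Ordinal lt_kn by apply: val_inj.
  have := zs_max a Fa; have := zs_max b Fb; move: wa wb; rewrite /= !wE; lra.
have [F [_ [z Fz] FP agree]] := lex n.
exists z; apply: face_extreme_point FP _; split => // a b t Fa Fb _ _.
by split; apply/matrixP => i j; rewrite (ord1 j); apply: agree.
Qed.

Lemma extreme_argmax n (P : set 'cV[R]_n) w :
  polyhedron P -> P !=set0 -> P `<=` [set z | mxle 0 z] ->
  (exists b, forall z, P z -> vdot w z <= b) ->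
  exists z, extreme_point P z /\ forall z', P z' -> vdot w z' <= vdot w z.
Proof.
move=> pP neP P_ge0 bounded; have [zs Pzs zs_max] := polyhedron_argmax pP neP bounded.
have [z zext] : exists z, extreme_point (P `&` [set z | vdot w zs <= vdot w z]) z.
  apply: exists_extreme_point; first exact: polyhedronI pP (polyhedron_vdot_ge _ _).
    by exists zs; split => /=.
  by move=> z [/P_ge0].
exists z; split; first exact: face_extreme_point (face_argmax zs_max) zext.
by move=> z' Pz'; apply: le_trans (zs_max _ Pz') _; case: zext => -[].
Qed.

End Polyhedra.


Section Duality.
Variables (R : realType) (ny q : nat) (B2 : 'M[R]_(q, ny)) (c2 : 'cV[R]_ny).
Implicit Types (r pi g : 'cV[R]_q) (y : 'cV[R]_ny).

Lemma weak_duality r pi y : PiSet B2 c2 pi -> mxle 0 y -> mxle r (B2 *m y) ->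
  vdot r pi <= vdot c2 y.
Proof.
move=> [pi_ge0 pi_c2] y_ge0 ry; apply: le_trans (vdot_le ry pi_ge0) _.
by rewrite vdot_mulmx vdotC vdot_le.
Qed.

Lemma ray_infeasible r g y : reccPi B2 g -> 0 < vdot r g -> mxle 0 y ->
  ~ mxle r (B2 *m y).
Proof.
move=> [g_ge0 Bg] rg y_ge0 ry; have := vdot_le ry g_ge0.
rewrite vdot_mulmx (vdotC y); have := vdot_le Bg y_ge0; rewrite vdot0l; lra.
Qed.

Lemma farkas_ray r : ~ (exists y, mxle 0 y /\ mxle r (B2 *m y)) ->
  exists g, reccPi B2 g /\ 0 < vdot r g.
Proof.
move=> infeasible; have [|g [g_ge0 Bg rg]] := mx_alternative_ge0 (M := - B2) (c := - r).
  by move=> [y [y_ge0]]; rewrite mulNmx mxleN2 => ry; apply: infeasible; exists y.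
exists g; split; last by rewrite -oppr_lt0 -vdotNl.
by split => //; move: Bg; rewrite linearN /= mulNmx -[X in mxle X _]oppr0 mxleN2.
Qed.

Lemma homogeneous_lower_bound r s y0 yv t :
  mxle 0 y0 -> mxle r (B2 *m y0) ->
  (forall y, mxle 0 y -> mxle r (B2 *m y) -> s <= vdot c2 y) ->
  mxle 0 yv -> 0 <= t -> mxle (t *: r) (B2 *m yv) -> t * s <= vdot c2 yv.
Proof.
move=> y0_ge0 ry0 lb yv_ge0; rewrite le_eqVlt => /predU1P[<-|t_gt0] ryv.
  (* [yv] is a recession direction of the primal feasible set. *)
  rewrite mul0r leNgt; apply/negP => cyv_lt0; have s_le := lb y0 y0_ge0 ry0.
  pose k := (vdot c2 y0 - s + 1) / - vdot c2 yv.
  have k_ge0 : 0 <= k by apply: divr_ge0; lra.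
  have kc : k * vdot c2 yv = - (vdot c2 y0 - s + 1) by rewrite /k; field; rewrite lt_eqF.
  have : s <= vdot c2 (y0 + k *: yv).
    apply: lb; first by apply: mxle0D => //; apply: mxle0Z.
    rewrite mulmxDr -scalemxAr -[r]addr0; apply: mxleD => //.
    by apply: mxle0Z; rewrite // -(scale0r r).
  by rewrite vdotDr vdotZr kc; lra.
have := lb (t^-1 *: yv); rewrite vdotZr ler_pdivlMl //; apply.
  by apply: mxle0Z; rewrite // invr_ge0 ltW.
rewrite -scalemxAr -[X in mxle X _]scale1r -(mulVf (lt0r_neq0 t_gt0)) -scalerA.
by apply: mxleZ; rewrite // invr_ge0 ltW.
Qed.

Lemma strong_duality r s : (exists y, mxle 0 y /\ mxle r (B2 *m y)) ->
  (forall y, mxle 0 y -> mxle r (B2 *m y) -> s <= vdot c2 y) ->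
  exists pi, PiSet B2 c2 pi /\ s <= vdot r pi.
Proof.
move=> [y0 [y0_ge0 ry0]] lb.
have [//|infeasible] := pselect (exists pi, PiSet B2 c2 pi /\ s <= vdot r pi).
have [|l [t [l_ge0 t_ge0 Ml cl]]] :=
  mx_alternative_row (M := col_mx (- 1%:M) B2^T) (c := col_mx 0 c2) (w := r) (s := s).
  move=> [pi []]; rewrite mul_col_mx mxle_col_mx mulNmx mul1mx mxle_opp0 => Pi_pi spi.
  by apply: infeasible; exists pi.
move: l_ge0 Ml cl; rewrite -[l]vsubmxK -col_mx0 mxle_col_mx tr_col_mx mul_row_col.
rewrite vdot_col_mx vdot0l add0r linearN /= trmx1 mulNmx mul1mx trmxK.
move=> [mu_ge0 yv_ge0] Byv cyv.
have := homogeneous_lower_bound y0_ge0 ry0 lb yv_ge0 t_ge0.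
rewrite -(addNKr (usubmx l) (B2 *m _)) Byv -[X in mxle X _]add0r.
by move=> /(_ (mxleD mu_ge0 (mxle_refl _))); lra.
Qed.

Lemma polyhedron_PiSet : polyhedron (PiSet B2 c2).
Proof.
have -> : PiSet B2 c2 = [set z | mxle 0 z] `&` [set z | mxle (B2^T *m z) c2] by [].
exact: polyhedronI (polyhedron_ge0 _ _) (polyhedron_mxle _ _).
Qed.

Lemma dual_extreme_point r s : (exists y, mxle 0 y /\ mxle r (B2 *m y)) ->
  (forall y, mxle 0 y -> mxle r (B2 *m y) -> s <= vdot c2 y) ->
  exists pi, PPi B2 c2 pi /\ s <= vdot r pi.
Proof.
move=> feasible lb; have [pi [Pi_pi spi]] := strong_duality feasible lb.
have [y0 [y0_ge0 ry0]] := feasible.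
have bounded : exists b, forall z, PiSet B2 c2 z -> vdot r z <= b.
  by exists (vdot c2 y0) => z Pi_z; apply: weak_duality Pi_z y0_ge0 ry0.
have [pi' [pi'_ext pi'_max]] :=
  extreme_argmax polyhedron_PiSet (ex_intro _ pi Pi_pi) (fun z Pi_z => Pi_z.1) bounded.
by exists pi'; split => //; apply: le_trans spi (pi'_max _ Pi_pi).
Qed.

(* Cutting the recession cone by [sum g = 1] turns its extreme rays into extreme
   points of a polytope. *)
Definition dual_slice := [set g | reccPi B2 g /\ vdot (const_mx 1) g = 1].

Lemma reccPiZ k g : 0 <= k -> reccPi B2 g -> reccPi B2 (k *: g).
Proof.
move=> k_ge0 [g_ge0 Bg]; split; first exact: mxle0Z.
by rewrite -scalemxAr -(scaler0 _ k); apply: mxleZ.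
Qed.

Lemma polyhedron_dual_slice : polyhedron dual_slice.
Proof.
have -> : dual_slice = ([set g | mxle 0 g] `&` [set g | mxle (B2^T *m g) 0]) `&`
    ([set g | vdot (const_mx 1) g <= 1] `&` [set g | 1 <= vdot (const_mx 1) g]).
  apply/seteqP; split => g [recc_g g1]; split => //; first by rewrite /= g1.
  by apply/eqP; rewrite eq_le; apply/andP.
apply: polyhedronI; apply: polyhedronI.
- exact: polyhedron_ge0.
- exact: polyhedron_mxle.
- exact: polyhedron_vdot_le.
- exact: polyhedron_vdot_ge.
Qed.

Lemma dual_slice_extreme_ray g : extreme_point dual_slice g -> RPi B2 g.
Proof.
move=> [[recc_g g1] g_ext]; split => //; split.
  by apply: contra_eqN g1 => /eqP ->; rewrite vdotC vdot0l eq_sym oner_eq0.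
move=> a b recc_a recc_b gab.
pose ma := vdot (const_mx 1) a; pose mb := vdot (const_mx 1) b.
have mab : ma + mb = 1 by rewrite -vdotDr -gab.
have [ma0|ma_neq0] := eqVneq ma 0.
  by exists 0, 1; rewrite scale0r scale1r gab (vdot1_eq0 recc_a.1 ma0) add0r.
have [mb0|mb_neq0] := eqVneq mb 0.
  by exists 1, 0; rewrite scale0r scale1r gab (vdot1_eq0 recc_b.1 mb0) addr0.
have ma_gt0 : 0 < ma by rewrite lt_def ma_neq0 vdot1_ge0 //; exact: recc_a.1.
have mb_gt0 : 0 < mb by rewrite lt_def mb_neq0 vdot1_ge0 //; exact: recc_b.1.
have slice_a : dual_slice (ma^-1 *: a).
  by split; [apply: reccPiZ; rewrite // invr_ge0 ltW | rewrite vdotZr mulVf].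
have slice_b : dual_slice (mb^-1 *: b).
  by split; [apply: reccPiZ; rewrite // invr_ge0 ltW | rewrite vdotZr mulVf].
have ma01 : 0 < ma < 1 by apply/andP; split; lra.
have gE : g = ma *: (ma^-1 *: a) + (1 - ma) *: (mb^-1 *: b).
  by rewrite !scalerA mulfV // (_ : 1 - ma = mb) ?mulfV ?scale1r //; lra.
have [ga gb] := g_ext _ _ _ slice_a slice_b ma01 gE.
exists ma, mb; split; rewrite ?ltW //.
  by rewrite -ga scalerA mulfV // scale1r.
by rewrite -gb scalerA mulfV // scale1r.
Qed.

Lemma dual_extreme_ray r : (exists g, reccPi B2 g /\ 0 < vdot r g) ->
  exists g, RPi B2 g /\ 0 < vdot r g.
Proof.
move=> [g [recc_g rg]]; pose m := vdot (const_mx 1) g.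
have m_gt0 : 0 < m.
  rewrite lt_def vdot1_ge0 ?andbT; last exact: recc_g.1.
  by apply: contra_ltN rg => /eqP/(vdot1_eq0 recc_g.1) ->; rewrite vdotC vdot0l.
have slice_g : dual_slice (m^-1 *: g).
  by split; [apply: reccPiZ; rewrite // invr_ge0 ltW | rewrite vdotZr mulVf ?lt0r_neq0].
have bounded : exists b, forall z, dual_slice z -> vdot r z <= b.
  exists (\sum_i `|r i 0| * 1) => z [[z_ge0 _] z1]; apply: vdot_bound => i.
  by rewrite ger0_norm ?(mxle0_cV _).1 // -z1 vdot1_ge_coord.
have [g' [g'_ext g'_max]] := extreme_argmax polyhedron_dual_slice
  (ex_intro _ _ slice_g) (fun z slice_z => slice_z.1.1) bounded.
exists g'; split; first exact: dual_slice_extreme_ray.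
by apply: lt_le_trans (g'_max _ slice_g); rewrite vdotZr mulr_gt0 // invr_gt0.
Qed.

End Duality.


Section SecondStage.
Variables (R : realType) (nx nu ny p q : nat).
Variables (F : 'cV[R]_nx -> 'M[R]_(p, nu)) (h : 'cV[R]_p) (G : 'M[R]_(p, nx)).
Variables (B1 : 'M[R]_(q, nx)) (B2 : 'M[R]_(q, ny)) (E : 'M[R]_(q, nu)).
Variables (d : 'cV[R]_q) (c2 : 'cV[R]_ny) (x : 'cV[R]_nx).

Local Notation U := (Uset F h G x).
Local Notation Y := (Yset B1 B2 E d x).
Local Notation OU := (OU F h G E x).
Local Notation Q := (Qval B1 B2 E d c2 x).
Local Notation rhs u := (d - B1 *m x - E *m u).

Lemma OU_rhs_max beta u u0 : OU beta u -> U u0 ->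
  vdot (rhs u0) beta <= vdot (rhs u) beta.
Proof. by move=> [_ u_max] Uu0; rewrite !vdotDl lerD2l; apply: u_max. Qed.

Lemma OU_exists beta : U !=set0 ->
  (exists M, forall u, U u -> forall i, `|u i 0| <= M) -> exists u, OU beta u.
Proof.
move=> neU [M U_bounded]; pose w := - (E^T *m beta).
have wE u : vdot (- (E *m u)) beta = vdot w u by rewrite !vdotNl vdot_mulmx vdotC.
have polyU : polyhedron U.
  have -> : U = [set u | mxle 0 u] `&` [set u | mxle (F x *m u) (h + G *m x)] by [].
  exact: polyhedronI (polyhedron_ge0 _ _) (polyhedron_mxle _ _).
have [|u Uu u_max] := polyhedron_argmax (w := w) polyU neU.
  by exists (\sum_i `|w i 0| * M) => u Uu; apply: vdot_bound => i; apply: U_bounded.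
by exists u; split => // u' Uu'; rewrite !wE; apply: u_max.
Qed.

Lemma Qval_ge_dual u pi : PiSet B2 c2 pi -> ((vdot (rhs u) pi)%:E <= Q u)%E.
Proof.
move=> Pi_pi; apply: le_ereal_inf_tmp => _ [y [y_ge0 ry] <-].
by rewrite lee_fin; apply: weak_duality ry.
Qed.

Lemma Qval_infeasible u : ~ (Y u !=set0) -> Q u = +oo%E.
Proof.
move=> infeasible; rewrite /Qval; have -> : [set (vdot c2 y)%:E | y in Y u] = set0.
  by apply/seteqP; split => // z [y Yy]; case: infeasible; exists y.
exact: ereal_inf0.
Qed.

Lemma vertex_response_ge u0 s : U u0 -> Y u0 !=set0 ->
  (forall y, Y u0 y -> s <= vdot c2 y) ->
  exists pi, PPi B2 c2 pi /\ forall u, OU pi u -> (s%:E <= Q u)%E.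
Proof.
move=> Uu0 [y0 Yy0] lb; have [pi [pi_ext spi]] := dual_extreme_point
  (ex_intro _ y0 Yy0) (fun y y_ge0 ry => lb y (conj y_ge0 ry)).
exists pi; split => // u OUu; apply: le_trans (Qval_ge_dual u pi_ext.1).
by rewrite lee_fin; apply: le_trans spi (OU_rhs_max OUu Uu0).
Qed.

Lemma ray_response_infeasible u0 : U u0 -> ~ (Y u0 !=set0) ->
  exists g, RPi B2 g /\ forall u, OU g u -> Q u = +oo%E.
Proof.
move=> Uu0 infeasible.
have [g [g_ray rg]] := dual_extreme_ray (farkas_ray (r := rhs u0) infeasible).
exists g; split => // u OUu; apply: Qval_infeasible => -[y [y_ge0 ry]].
exact: ray_infeasible g_ray.1 (lt_le_trans rg (OU_rhs_max OUu Uu0)) y_ge0 ry.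
Qed.

End SecondStage.

Theorem lemma4 (R : realType) (mi nc nu ny k p q : nat)
  (A : 'M[R]_(k, mi + nc)) (b : 'cV[R]_k)
  (F : 'cV[R]_(mi + nc) -> 'M[R]_(p, nu)) (h : 'cV[R]_p) (G : 'M[R]_(p, mi + nc))
  (B1 : 'M[R]_(q, mi + nc)) (B2 : 'M[R]_(q, ny)) (E : 'M[R]_(q, nu)) (d : 'cV[R]_q)
  (c1 : 'cV[R]_(mi + nc)) (c2 : 'cV[R]_ny)
  (A1 : forall x, Xset A b x -> Uset F h G x !=set0)
  (A2 : forall x, Xset A b x -> exists M : R,
          forall u, Uset F h G x u -> forall i, `|u i 0| <= M)
  (A3 : exists v : R,
          ereal_inf [set z | exists x u y, [/\ Xset A b x, Uset F h G x u,
                     Yset B1 B2 E d x u y & z = (vdot c1 x + vdot c2 y)%:E]]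
          = v%:E)
  (x : 'cV[R]_(mi + nc)) (hx : Xset A b x) :
  ereal_sup [set Qval B1 B2 E d c2 x u | u in Uset F h G x] =
  ereal_sup [set Qval B1 B2 E d c2 x u | u in
     (\bigcup_(pi in PPi B2 c2) OU F h G E x pi) `|`
     (\bigcup_(g in RPi B2) OU F h G E x g)].
Proof.
have OU_ne beta : exists u, OU F h G E x beta u.
  by apply: OU_exists; [exact: A1 | exact: A2].
apply/eqP; rewrite eq_le; apply/andP; split; last first.
  by apply/ereal_sup_le/image_subset => u [] [beta _ []].
apply: ge_ereal_sup => _ [u0 Uu0 <-].
have [[y0 Yy0]|infeasible] := pselect (Yset B1 B2 E d x u0 !=set0).
  case eQ : (Qval B1 B2 E d c2 x u0) => [s| |]; last by rewrite leNye.
    have lb y : Yset B1 B2 E d x u0 y -> s <= vdot c2 y.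
      by move=> Yy; rewrite -lee_fin -eQ; apply: ereal_inf_lbound; exists y.
    have [pi [pi_ext s_le]] := vertex_response_ge Uu0 (ex_intro _ y0 Yy0) lb.
    have [u OUu] := OU_ne pi; apply: le_trans (s_le u OUu) _.
    by apply: ereal_sup_ubound; exists u => //; left; exists pi.
  have : (Qval B1 B2 E d c2 x u0 <= (vdot c2 y0)%:E)%E.
    by apply: ereal_inf_lbound; exists y0.
  by rewrite eQ leye_eq.
have [g [g_ray g_inf]] := ray_response_infeasible c2 Uu0 infeasible.
have [u OUu] := OU_ne g; apply: le_trans (leey _) _; rewrite -(g_inf u OUu).
by apply: ereal_sup_ubound; exists u => //; right; exists g.
Qed.
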